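(* Let $B=\sum_{j=1}^{k-1}B_jz^{-j-1}dz\in O_B$ and suppose that for some $i\in\{1,\dots,k-1\}$ we have $B_{k-j}\in\mathfrak{h}_{k-j}$ for all $1\le j\le i$. Then $B_{k-j}=(dT)_{k-j}$ for all $1\le j\le i$.
   Context: Let $\mathfrak{g}=\mathfrak{gl}_n(\mathbb{C})$, $\mathfrak{t}$ a Cartan subalgebra, $k>1$, $T=\sum_{i=1}^{k-1}T_iz^{-i}$, $T_i\in\mathfrak{t}$, $T_{k-1}\ne0$, $dT=\sum_{i=1}^{k-1}(dT)_iz^{-i-1}dz$ with $(dT)_i=-iT_i$. $B_k=\{\sum_{i=0}^{k-1}b_iz^i:b_0=1\}\subset\mathrm{GL}_n(\mathbb{C}[z]/(z^k))$; $\mathfrak{b}_k^*=\{\sum_{i=1}^{k-1}X_iz^{-i-1}dz\}$ via $\mathrm{res}_{z=0}\mathrm{tr}$; coadjoint action $\mathrm{Ad}^*_bB$ = part of $bBb^{-1}$ in degrees $z^{-i-1}dz$, $1\le i\le k-1$; $O_B$ is the $B_k$-orbit of $dT$. $\mathfrak{h}_i=\bigcap_{j=i+1}^{k-1}\ker\mathrm{ad}_{T_j}$ for $0\le i\le k-2$ and $\mathfrak{h}_{k-1}=\mathfrak{g}$. *)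

From HB Require Import structures.
From mathcomp Require Import all_boot all_order all_algebra.
From mathcomp Require Import complex.
From mathcomp Require Import Rstruct.
From Stdlib Require Rdefinitions.
Set Implicit Arguments. Unset Strict Implicit. Unset Printing Implicit Defensive.
Import Order.TTheory GRing.Theory Num.Theory.
Local Open Scope ring_scope.

Notation CC := (complex Rdefinitions.R).

(* An element b = sum_{p<k} b_p z^p of GL_n(C[z]/(z^k)) is given by its
   coefficient sequence b : nat -> 'M_n (only b_0,...,b_{k-1} matter).
   b lies in B_k iff b_0 = 1. *)
Definition in_Bk (n k : nat) (b : nat -> 'M[CC]_n) : Prop := b 0%N = 1%:M.

(* c is the inverse of b in GL_n(C[z]/(z^k)) (two-sided). *)
Definition is_inv_trunc (n k : nat) (b c : nat -> 'M[CC]_n) : Prop :=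
  forall m : nat, (m < k)%N ->
    \sum_(p < m.+1) b p *m c (m - p)%N = (m == 0%N)%:R%:M /\
    \sum_(p < m.+1) c p *m b (m - p)%N = (m == 0%N)%:R%:M.

(* An element X = sum_{j=1}^{k-1} X_j z^{-j-1} dz of b_k^* is given by its
   coefficient sequence X : nat -> 'M_n (only X_1,...,X_{k-1} matter).
   coadj k b c X i is the coefficient of z^{-i-1} dz in b X c, where c = b^{-1}:
   it is  sum_{p,q >= 0, p+q+i <= k-1} b_p X_{p+q+i} c_q. *)
Definition coadj (n k : nat) (b c X : nat -> 'M[CC]_n) (i : nat) : 'M[CC]_n :=
  \sum_(p < k) \sum_(q < k)
     (if (p + q + i < k)%N then b p *m X (p + q + i)%N *m c q else 0).

Definition dT (n : nat) (T : nat -> 'M[CC]_n) (i : nat) : 'M[CC]_n :=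
  - (i%:R *: T i).

Definition in_OB (n k : nat) (T X : nat -> 'M[CC]_n) : Prop :=
  exists b c : nat -> 'M[CC]_n,
    in_Bk k b /\ is_inv_trunc k b c /\
    forall i : nat, (1 <= i <= k.-1)%N -> X i = coadj k b c (dT T) i.

Definition in_h (n k : nat) (T : nat -> 'M[CC]_n) (i : nat) (Y : 'M[CC]_n) : Prop :=
  forall j : nat, (i < j < k)%N -> Y *m T j = T j *m Y.

(* T_1, ..., T_{k-1} lie in a Cartan subalgebra t of gl_n(C), i.e. they are
   simultaneously diagonalizable (every Cartan subalgebra of gl_n(C) is a
   conjugate of the diagonal one). *)
Definition in_common_cartan (n k : nat) (T : nat -> 'M[CC]_n) : Prop :=
  exists P : 'M[CC]_n, P \in unitmx /\
    forall i : nat, (1 <= i <= k.-1)%N -> is_diag_mx (invmx P *m T i *m P).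

From HB Require Import structures.
From mathcomp Require Import all_boot all_order all_algebra.
From mathcomp Require Import complex Rstruct.
From mathcomp Require Import zify.
Set Implicit Arguments. Unset Strict Implicit. Unset Printing Implicit Defensive.
Import Order.TTheory GRing.Theory Num.Theory.
Local Open Scope ring_scope.

(* Conjugate so that the T_l are diagonal and index coefficients by depth
   s = k-1-i.  Since B is b dT b^-1 truncated, B b = b dT up to depth k-1, a
   convolution identity; with b_0 = 1 it gives, by induction on the depth t,
     B_t - dT_t = sum_{p=1}^t [b_p, dT_{t-p}].
   The left side commutes with every dT_s, s < t (this is B_t in h), and b_p
   commutes with dT_s whenever s + p < t (induction).  Entrywise in the
   diagonal basis, the shallowest dT_s separating the two diagonal entries
   forces B_t = dT_t and [b_p, dT_{t-p}] = 0, which propagates the induction. *)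

Section Convolution.
Variable R : pzSemiRingType.
Implicit Types (a d e : nat -> R) (t : nat).

Definition conv a d t : R := \sum_(j < t.+1) a j * d (t - j)%N.

Lemma convEr a d t : conv a d t = \sum_(j < t.+1) a (t - j)%N * d j.
Proof.
rewrite /conv (reindex_inj rev_ord_inj) /=; apply: eq_bigr => j _.
by rewrite subSS subKn ?leq_ord.
Qed.

Lemma eq_conv a a' d d' t :
  (forall m, (m <= t)%N -> a m = a' m) -> (forall m, (m <= t)%N -> d m = d' m) ->
  conv a d t = conv a' d' t.
Proof. by move=> eq_a eq_d; apply: eq_bigr => j _; rewrite eq_a ?eq_d ?leq_subr ?leq_ord. Qed.

Lemma convA a d e t : conv (conv a d) e t = conv a (conv d e) t.
Proof.
rewrite /conv.
transitivity (\sum_(j < t.+1) \sum_(i < t.+1 | (j <= i)%N) a j * d (i - j)%N * e (t - i)%N).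
  under eq_bigr => i _ do rewrite mulr_suml
    (big_ord_widen t.+1 (fun j => a j * d (i - j)%N * e (t - i)%N) (ltn_ord i)).
  by rewrite (exchange_big_dep xpredT).
apply: eq_bigr => j _.
rewrite mulr_sumr -(big_geq_mkord j t.+1 xpredT (fun i => a j * d (i - j)%N * e (t - i)%N)).
rewrite -{1}[j : nat]add0n big_addn big_mkord subSn ?leq_ord //.
by apply: eq_bigr => l _; rewrite mulrA addnK addnC subnDA.
Qed.

Lemma conv_unitr a e t :
  e 0%N = 1 -> (forall m, (0 < m <= t)%N -> e m = 0) -> conv a e t = a t.
Proof.
move=> e0 e_gt0; rewrite /conv big_ord_recr /= subnn e0 mulr1 big1 ?add0r // => j _.
by rewrite e_gt0 ?mulr0 //; have := ltn_ord j; lia.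
Qed.

End Convolution.

Lemma conv_morph (R S : pzSemiRingType) (f : R -> S) a d t :
  {morph f : x y / x + y} -> f 0 = 0 -> {morph f : x y / x * y} ->
  f (conv a d t) = conv (f \o a) (f \o d) t.
Proof.
by move=> fD f0 fM; rewrite /conv (big_morph f fD f0); apply: eq_bigr => j _; rewrite fM.
Qed.

(* The entrywise form of the inductive step: D is an entry of B_t - dT_t,
   beta p the same entry of b_p, and delta s the difference of the two
   corresponding diagonal entries of dT_s. *)
Lemma annihilated_triangular_sum (R : idomainType) t (D : R) (beta delta : nat -> R) :
  (forall s, (s < t)%N -> D * delta s = 0) ->
  (forall p s, (s + p < t)%N -> beta p * delta s = 0) ->
  D = \sum_(p < t) beta p.+1 * delta (t - p.+1)%N ->
  D = 0 /\ (forall p, (0 < p <= t)%N -> beta p * delta (t - p)%N = 0).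
Proof.
elim: t delta => [|t IHt] delta D_delta beta_delta.
  by rewrite big_ord0 => ->; split=> // p; lia.
rewrite big_ord_recr /= subnn.
have [delta0|/negPf delta0_neq0] := eqVneq (delta 0%N) 0.
  rewrite delta0 mulr0 addr0 => DE.
  have [D0 IH] : D = 0 /\ (forall p, (0 < p <= t)%N -> beta p * delta (t - p).+1 = 0).
    apply: (IHt (fun s => delta s.+1)).
    - by move=> s st; apply: D_delta.
    - by move=> p s sp; apply: beta_delta; lia.
    - by rewrite DE; apply: eq_bigr => p _ /=; congr (_ * delta _); have := ltn_ord p; lia.
  split=> // p p_range; have [->|pt] : p = t.+1 \/ (p <= t)%N by lia.
    by rewrite subnn delta0 mulr0.
  by rewrite subSn //; apply: IH; lia.
have cancel_delta0 x : x * delta 0%N = 0 -> x = 0.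
  by move/eqP; rewrite mulf_eq0 delta0_neq0 orbF => /eqP.
have D0 : D = 0 by apply/cancel_delta0/D_delta.
have beta0 p : (p <= t)%N -> beta p = 0.
  by move=> pt; apply/cancel_delta0/beta_delta; lia.
rewrite big1 => [|p _]; last by rewrite beta0 ?mul0r.
rewrite add0r D0 => /esym/cancel_delta0 beta_t.
split=> // p p_range; have [->|pt] : p = t.+1 \/ (p <= t)%N by lia.
  by rewrite beta_t mul0r.
by rewrite beta0 ?mul0r.
Qed.

Section DiagonalCommutator.
Variables (R : comPzRingType) (n : nat).
Implicit Types A M : 'M[R]_n.

Lemma commutator_diag_mxE A M i j : is_diag_mx M ->
  (A *m M - M *m A) i j = A i j * (M j j - M i i).
Proof.
case/diag_mxP=> d ->; rewrite mul_mx_diag mul_diag_mx !mxE !eqxx !mulr1n.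
by rewrite mulrBr [d 0 i * _]mulrC.
Qed.

Lemma comm_diag_mxP A M : is_diag_mx M ->
  comm_mx A M <-> forall i j, A i j * (M j j - M i i) = 0.
Proof.
move=> Mdiag; rewrite /comm_mx; split=> [AM i j|AM].
  by rewrite -commutator_diag_mxE // AM subrr mxE.
apply/eqP; rewrite -subr_eq0; apply/eqP/matrixP => i j.
by rewrite commutator_diag_mxE // AM mxE.
Qed.

End DiagonalCommutator.

Section Intertwined.
Variables (R : idomainType) (n : nat) (b B X : nat -> 'M[R]_n).
Hypothesis b0 : b 0%N = 1.

Lemma intertwined_diag_step t :
  (forall s, (s <= t)%N -> is_diag_mx (X s)) ->
  (forall s, (s < t)%N -> comm_mx (B t) (X s)) ->
  (forall s, (s < t)%N -> B s = X s) ->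
  (forall p s, (s + p < t)%N -> comm_mx (b p) (X s)) ->
  conv B b t = conv b X t ->
  B t = X t /\ (forall p, (p <= t)%N -> comm_mx (b p) (X (t - p))).
Proof.
move=> Xdiag BX eqBX bX intertw.
have DE : B t - X t = \sum_(p < t) (b p.+1 *m X (t - p.+1)%N - X (t - p.+1)%N *m b p.+1).
  have -> : B t - X t = conv b X t - conv X b t.
    rewrite -intertw /conv !big_ord_recr /= subnn b0 !mulr1.
    rewrite (eq_bigr (fun j : 'I_t => X j * b (t - j)%N)) => [|j _]; last by rewrite eqBX.
    by rewrite opprD addrACA subrr add0r.
  by rewrite [conv X b t]convEr /conv -sumrB big_ord_recl /= subn0 b0 mulr1 mul1r subrr add0r.
have key x y : (B t - X t) x y = 0 /\
    (forall p, (0 < p <= t)%N -> b p x y * (X (t - p) y y - X (t - p) x x) = 0).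
  apply: (annihilated_triangular_sum (beta := fun p => b p x y)
                                     (delta := fun s => X s y y - X s x x)).
  - move=> s st; have Xs := Xdiag s (ltnW st).
    have XtXs : comm_mx (X t) (X s).
      have [[dt ->] [ds ->]] := (diag_mxP _ (Xdiag t (leqnn t)), diag_mxP _ Xs).
      exact: diag_mx_comm.
    have /(comm_diag_mxP _ Xs) : comm_mx (B t - X t) (X s).
      by rewrite /comm_mx mulmxBl mulmxBr BX // XtXs.
    by apply.
  - move=> p s sp /=; have Xs : is_diag_mx (X s) by apply: Xdiag; lia.
    exact: (comm_diag_mxP _ Xs).1 (bX p s sp) x y.
  - by rewrite DE summxE; apply: eq_bigr => p _; rewrite commutator_diag_mxE // Xdiag ?leq_subr.
split.
  by apply/eqP; rewrite -subr_eq0; apply/eqP/matrixP => x y; rewrite (key x y).1 mxE.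
move=> p pt; have [->|p_gt0] := posnP p; first by rewrite b0; exact: comm1mx.
apply/(comm_diag_mxP _ (Xdiag _ (leq_subr p t))) => x y.
by apply: (key x y).2; rewrite p_gt0.
Qed.

Lemma intertwined_diag_eq i :
  (forall s, (s < i)%N -> is_diag_mx (X s)) ->
  (forall s t, (s < t < i)%N -> comm_mx (B t) (X s)) ->
  (forall t, (t < i)%N -> conv B b t = conv b X t) ->
  forall t, (t < i)%N -> B t = X t.
Proof.
move=> Xdiag BX intertw.
suff inv t : (t <= i)%N ->
    (forall s, (s < t)%N -> B s = X s) /\ (forall p s, (s + p < t)%N -> comm_mx (b p) (X s)).
  by move=> t ti; apply: (inv i (leqnn i)).1.
elim: t => [|t IHt] ti; first by split.
have [eqBX bX] := IHt (ltnW ti).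
have Xdiag_t s : (s <= t)%N -> is_diag_mx (X s) by move=> st; apply: Xdiag; lia.
have BX_t s : (s < t)%N -> comm_mx (B t) (X s) by move=> st; apply: BX; lia.
have [eqBXt bXt] := intertwined_diag_step Xdiag_t BX_t eqBX bX (intertw t ti).
split=> [s|p s]; rewrite ltnS leq_eqVlt => /orP[/eqP st|]; [by rewrite st | exact: eqBX | | exact: bX].
by rewrite -[s](addnK p) st; apply: bXt; rewrite -st leq_addl.
Qed.

End Intertwined.

Lemma intertwined_simdiag_eq (R : idomainType) n i (P : 'M[R]_n) (b B X : nat -> 'M[R]_n) :
  P \in unitmx -> b 0%N = 1 ->
  (forall s, (s < i)%N -> is_diag_mx (invmx P *m X s *m P)) ->
  (forall s t, (s < t < i)%N -> comm_mx (B t) (X s)) ->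
  (forall t, (t < i)%N -> conv B b t = conv b X t) ->
  forall t, (t < i)%N -> B t = X t.
Proof.
move=> Punit b0 Xdiag BX intertw t ti.
pose cj A := invmx P *m A *m P.
have cjM : {morph cj : A C / A *m C}.
  by move=> A C; rewrite /cj !mulmxA mulmxK.
have cj_conv a d s : cj (conv a d s) = conv (cj \o a) (cj \o d) s.
  apply: conv_morph; [by move=> A C; rewrite /cj mulmxDr mulmxDl | by rewrite /cj mulmx0 mul0mx | exact: cjM].
have cjK : cancel cj (fun A => P *m A *m invmx P).
  by move=> A; rewrite /cj !mulmxA mulmxV // mul1mx -mulmxA mulmxV // mulmx1.
apply: (can_inj cjK); apply: (intertwined_diag_eq (b := cj \o b) (B := cj \o B) _ Xdiag _ _ ti).
- by rewrite /= b0 /cj mulmx1 mulVmx.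
- by move=> s t' st; rewrite /comm_mx -!cjM BX.
- by move=> t' t'i; rewrite -!cj_conv intertw.
Qed.

Section CoadjointOrbit.
Variables (n k : nat) (b c : nat -> 'M[CC]_n).

Lemma coadj_conv X s : (s < k)%N ->
  coadj k b c X (k.-1 - s) = conv b (conv (fun u => X (k.-1 - u)%N) c) s.
Proof.
move=> sk; rewrite /coadj /conv.
rewrite (big_ord_widen k (fun p => b p * conv (fun u => X (k.-1 - u)%N) c (s - p)) sk).
rewrite [RHS]big_mkcond; apply: eq_bigr => p _; case: ifP => [ps|/negbT ps]; last first.
  by rewrite big1 // => q _; rewrite ifF //; lia.
have spk : ((s - p).+1 <= k)%N by lia.
rewrite convEr mulr_sumr (big_ord_widen k (fun q => b p * (X (k.-1 - (s - p - q))%N * c q)) spk).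
rewrite [RHS]big_mkcond; apply: eq_bigr => q _.
have -> : (p + q + (k.-1 - s) < k)%N = (q < (s - p).+1)%N by lia.
case: ifP => // qs; rewrite mulrA; congr (b p * X _ * c q); lia.
Qed.

Lemma coadj_intertwine X t : is_inv_trunc k b c -> (t < k)%N ->
  conv (fun s => coadj k b c X (k.-1 - s)) b t = conv b (fun s => X (k.-1 - s)%N) t.
Proof.
move=> bc tk.
have coadjE m : (m <= t)%N ->
    coadj k b c X (k.-1 - m) = conv b (conv (fun u => X (k.-1 - u)%N) c) m.
  by move=> mt; apply: coadj_conv; lia.
rewrite (eq_conv coadjE (fun _ _ => erefl)) convA; apply: eq_conv => // s st.
rewrite convA conv_unitr // => [|m m_range].
  by have [_ cb0] := bc 0%N (leq_ltn_trans (leq0n t) tk); rewrite /conv cb0 mulr1n.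
have [_ cbm] := bc m ltac:(lia).
by rewrite /conv cbm; case: m m_range {cbm} => // m _; rewrite mulr0n raddf0.
Qed.

End CoadjointOrbit.

Theorem lemma3p12 (n k : nat) (T : nat -> 'M[CC]_n) (B : nat -> 'M[CC]_n) :
  (1 < k)%N ->
  in_common_cartan k T ->
  T k.-1 != 0 ->
  in_OB k T B ->
  forall i : nat, (1 <= i <= k.-1)%N ->
    (forall j : nat, (1 <= j <= i)%N -> in_h k T (k - j)%N (B (k - j)%N)) ->
    forall j : nat, (1 <= j <= i)%N -> B (k - j)%N = dT T (k - j)%N.
Proof.
move=> _ [P [Punit Tdiag]] _ [b [c [b0 [bc BE]]]] i i_range hB j j_range.
have -> : (k - j = k.-1 - j.-1)%N by lia.
apply: (@intertwined_simdiag_eq _ _ i P b (fun s => B (k.-1 - s)%N) (fun s => dT T (k.-1 - s)%N));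
  rewrite ?b0 //; last by lia.
- move=> s si; have /diag_mxP[d Td] := Tdiag (k.-1 - s)%N ltac:(lia).
  by rewrite /dT mulmxN mulNmx -scalemxAr -scalemxAl Td -linearZ -linearN diag_mx_is_diag.
- move=> s t st; have BT := hB t.+1 ltac:(lia) (k.-1 - s)%N ltac:(lia).
  rewrite (_ : k - t.+1 = k.-1 - t)%N in BT; last by lia.
  by rewrite /comm_mx /dT mulmxN mulNmx -scalemxAr -scalemxAl BT.
- move=> t ti; rewrite -(coadj_intertwine (dT T) bc); last by lia.
  by apply: eq_conv => // s st; rewrite BE //; lia.
Qed.
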